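(* Let $a<b$ be real numbers, $J=(a,b)\times 0\subset\mathbb{R}^2$, $N=J\cup\mathbb{R}\times(0,+\infty)$, and let $U$ be an open neighborhood of $J$ in $N$. Then there exists a half open trapezoid $T\subset U$ with base $J$.
   Context: For $c<d$ and continuous $\alpha,\beta:(c,d]\to\mathbb{R}$ with $\alpha(y)<\beta(y)$ for all $y$, the set $T=\{(x,y)\in\mathbb{R}^2:\alpha(y)\le x\le\beta(y),\ c<y\le d\}$ is a half open trapezoid. If the (finite or infinite) limits $\lim_{y\to c+0}\alpha(y)=a'$ and $\lim_{y\to c+0}\beta(y)=b'$ exist with $a'<b'$, then $(a',b')\times c$ is called the (lower) base of $T$. *)

From HB Require Import structures.
From mathcomp Require Import all_boot all_order all_algebra.
From mathcomp Require Import all_classical all_reals all_analysis.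
Set Implicit Arguments. Unset Strict Implicit. Unset Printing Implicit Defensive.
Import Order.TTheory GRing.Theory Num.Theory.
Import numFieldNormedType.Exports.
Local Open Scope classical_set_scope.
Local Open Scope ring_scope.

Section Defs.
Variable R : realType.

Definition half_open_trapezoid_data (T : set (R * R)) (c d : R)
  (alpha beta : R -> R) : Prop :=
  [/\ c < d,
      {within [set` `]c, d]], continuous alpha},
      {within [set` `]c, d]], continuous beta},
      (forall y, c < y <= d -> alpha y < beta y) &
      T = [set p | c < p.2 <= d /\ alpha p.2 <= p.1 <= beta p.2]].

Definition half_open_trapezoid (T : set (R * R)) : Prop :=
  exists c d alpha beta, half_open_trapezoid_data T c d alpha beta.

(* T is a half open trapezoid whose (lower) base is (a', b') x c, with a', b'
   finite reals (the only case needed here). *)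
Definition trapezoid_with_base (T : set (R * R)) (a' b' c : R) : Prop :=
  a' < b' /\
  exists d alpha beta, half_open_trapezoid_data T c d alpha beta /\
    alpha y @[y --> c^'+] --> a' /\ beta y @[y --> c^'+] --> b'.

Definition segJ (a b : R) : set (R * R) := [set p | a < p.1 < b /\ p.2 = 0].

Definition setN (a b : R) : set (R * R) := segJ a b `|` [set p | 0 < p.2].

End Defs.

From HB Require Import structures.
From mathcomp Require Import all_boot all_order all_algebra.
From mathcomp Require Import all_classical all_reals all_analysis.
From mathcomp Require Import ring lra.
Set Implicit Arguments. Unset Strict Implicit. Unset Printing Implicit Defensive.
Import Order.TTheory GRing.Theory Num.Theory.
Import numFieldNormedType.Exports.
Local Open Scope classical_set_scope.
Local Open Scope ring_scope.

(* The left side of the trapezoid is a continuous curve x = alpha y squeezed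
   between the line x = a and the points of the strip missing from V.  Such a
   curve is obtained as a sup-envelope: every "obstacle" p = (x', y') of the
   strip contributes the function y |-> x' - K |y' / y - 1|, which equals x' at
   height y = y' and drops by at least K once y <= y' / 2.  The sup of these
   functions is continuous in 1/y (it is Lipschitz there), lies strictly to the
   right of every obstacle at its own height, and, because obstacles far from
   x = a stay at positive height (tube lemma), tends to a as y -> 0+.  The right
   side follows by the reflection x |-> -x, and the middle part of the
   trapezoid is covered by a tube around a compact subsegment of J. *)

Lemma segment_tube (R : realType) (V : set (R * R)) (l r : R) :
  open V -> (forall x, l <= x <= r -> V (x, 0)) ->
  exists2 eta : R, 0 < eta & forall x y, l <= x <= r -> `|y| < eta -> V (x, y).
Proof.
move=> oV lrV.
have /compact_near_coveringP := @segment_compact R l r.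
move=> /(_ R (nbhs (0:R)) (fun y x => V (x, y)) _) [x xlr|].
  have [[A B] /= [nA nB] AB] : nbhs (x, 0 : R) V.
    by apply: open_nbhs_nbhs; split => //; apply: lrV; rewrite /= in_itv /= in xlr.
  by exists (A, B) => //= -[u v] /= [Au Bv]; exact: (AB (u, v)).
move=> e /= e0 He; exists e => // x y xlr ye.
have /He : ball (0:R) e y by rewrite /ball /= sub0r normrN.
by apply; rewrite /= in_itv /=.
Qed.

Section Envelope.
Variables (R : realType) (I : set (R * R)) (g : R * R -> R) (K M D : R).
Hypothesis K_ge0 : 0 <= K.
Hypothesis g_le : forall p, I p -> g p <= M.
Hypothesis I_height : forall p, I p -> 0 <= p.2 <= D.
Hypothesis I_neq0 : I !=set0.

Definition envelope (s : R) : R := sup [set g p - K * `|p.2 * s - 1| | p in I].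

Definition envelope_curve (y : R) : R := y + envelope y^-1.

Let bumps_le s p : I p -> g p - K * `|p.2 * s - 1| <= M.
Proof. by move=> Ip; rewrite (le_trans _ (g_le Ip)) // lerBlDr lerDl mulr_ge0. Qed.

Let bumps_ub s : has_ubound [set g p - K * `|p.2 * s - 1| | p in I].
Proof. by exists M => _ [p Ip <-]; exact: bumps_le. Qed.

Let bumps_neq0 s : [set g p - K * `|p.2 * s - 1| | p in I] !=set0.
Proof. by case: I_neq0 => p Ip; exists (g p - K * `|p.2 * s - 1|), p. Qed.

Lemma envelope_ge s p : I p -> g p - K * `|p.2 * s - 1| <= envelope s.
Proof. by move=> Ip; apply: (ub_le_sup (bumps_ub s)); exists p. Qed.

Lemma envelope_le s : envelope s <= M.
Proof. by apply: ge_sup (bumps_neq0 s) _ => _ [p Ip <-]; exact: bumps_le. Qed.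

Lemma envelope_lipschitz s s' : envelope s <= envelope s' + K * D * `|s - s'|.
Proof.
apply: ge_sup (bumps_neq0 s) _ => _ [p Ip <-].
apply: le_trans (lerD (envelope_ge s' Ip) (lexx (K * D * `|s - s'|))).
have /andP[p2_ge0 p2_le] := I_height Ip.
have : `|p.2 * s' - 1| <= `|p.2 * s - 1| + D * `|s - s'|.
  have -> : p.2 * s' - 1 = (p.2 * s - 1) + p.2 * (s' - s) by ring.
  apply: le_trans (ler_normD _ _) _; rewrite lerD2l normrM distrC.
  by rewrite ler_wpM2r // ger0_norm.
move=> /(ler_wpM2l K_ge0); rewrite mulrDr mulrA; lra.
Qed.

Lemma envelope_continuous : continuous envelope.
Proof.
have D_ge0 : 0 <= D by case: I_neq0 => p /I_height /andP[]; exact: le_trans.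
have L_gt0 : 0 < K * D + 1 by rewrite ltr_wpDl ?mulr_ge0.
move=> s0; apply/cvgrPdist_lt => e e_gt0; apply/nbhs_ballP.
exists (e / (K * D + 1)) => /=; first by rewrite divr_gt0.
move=> s; rewrite /ball /= => s0s.
have := envelope_lipschitz s0 s; have := envelope_lipschitz s s0.
rewrite [`|s - s0|]distrC.
have : K * D * `|s0 - s| <= (K * D + 1) * `|s0 - s| by rewrite ler_wpM2r // lerDl.
have : (K * D + 1) * `|s0 - s| < e by rewrite mulrC -ltr_pdivlMr.
rewrite ltr_norml; lra.
Qed.

Lemma envelope_curve_continuous y : y != 0 -> {for y, continuous envelope_curve}.
Proof.
move=> y_neq0; apply: cvgD; first exact: cvg_id.
by apply: continuous_comp; [exact: inv_continuous | exact: envelope_continuous].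
Qed.

Lemma envelope_curve_gt p : I p -> 0 < p.2 -> g p < envelope_curve p.2.
Proof.
move=> Ip p2_gt0; have := envelope_ge (p.2)^-1 Ip.
rewrite divff ?gt_eqF // subrr normr0 mulr0 subr0 /envelope_curve => ?.
by rewrite -(add0r (g p)) ltr_leD.
Qed.

Lemma envelope_curve_le y : envelope_curve y <= y + M.
Proof. by rewrite lerD2l envelope_le. Qed.

(* An obstacle of value at least c + e lies at height >= eta >= 2 y, so at
   level 1/y its bump has dropped by K, below M - K < c. *)
Lemma envelope_inv_le c e eta y : 0 <= e -> M - K < c -> 0 < y -> 2 * y <= eta ->
  (forall p, I p -> c + e <= g p -> eta <= p.2) -> envelope y^-1 <= c + e.
Proof.
move=> e_ge0 MK_lt y_gt0 y_eta high.
apply: ge_sup (bumps_neq0 _) _ => _ [q Iq <-].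
have [gq_lt|gq_ge] := ltP (g q) (c + e).
  by rewrite ltW // (le_lt_trans _ gq_lt) // lerBlDr lerDl mulr_ge0.
have : 2 <= q.2 * y^-1 by rewrite ler_pdivlMr //; have := high q Iq gq_ge; lra.
move=> q2y; have : 1 <= `|q.2 * y^-1 - 1| by rewrite ger0_norm; lra.
move=> /(ler_wpM2l K_ge0); rewrite mulr1; have := g_le Iq; lra.
Qed.

Lemma envelope_curve_cvg c : 0 < D ->
  (forall y, 0 < y <= D -> exists2 p, I p & p.2 = y /\ g p = c) ->
  M - K < c ->
  (forall e, 0 < e ->
    exists2 eta, 0 < eta & forall p, I p -> c + e <= g p -> eta <= p.2) ->
  envelope_curve y @[y --> 0^'+] --> c.
Proof.
move=> D_gt0 base MK_lt high; apply/cvgrPdist_lt => e e_gt0.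
have e2_gt0 : 0 < e / 2 by rewrite divr_gt0.
have [eta eta_gt0 eta_high] := high _ e2_gt0.
have r_gt0 : 0 < Num.min (eta / 2) (Num.min (e / 2) D).
  by rewrite !lt_min D_gt0 e2_gt0 divr_gt0.
near=> y.
have y_gt0 : 0 < y by near: y; exact: nbhs_right_gt.
have : y < Num.min (eta / 2) (Num.min (e / 2) D) by near: y; exact: nbhs_right_lt.
rewrite !lt_min => /and3P[y_eta y_e y_D].
have [p Ip [p2y gpc]] := base y (ltac:(by rewrite y_gt0 ltW)).
have lb : c < envelope_curve y by rewrite -gpc -p2y envelope_curve_gt // p2y.
have ub : envelope y^-1 <= c + e / 2.
  by apply: (@envelope_inv_le c (e / 2) eta y _ MK_lt y_gt0 _ eta_high); [exact: ltW | lra].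
rewrite /envelope_curve in lb *; rewrite ler0_norm; lra.
Unshelve. all: by end_near.
Qed.

End Envelope.

Section Sides.
Variable R : realType.

Lemma left_side_curve (V : set (R * R)) (a m d : R) :
  open V -> a < m -> 0 < d -> (forall x, a < x <= m -> V (x, 0)) ->
  exists alpha : R -> R,
    [/\ forall y, 0 < y -> {for y, continuous alpha},
        alpha y @[y --> 0^'+] --> a,
        forall y, alpha y <= y + m
      & forall x y, 0 < y <= d -> alpha y <= x <= m -> V (x, y)].
Proof.
move=> oV am d_gt0 V0.
(* The obstacles; the left edge keeps the curve to the right of x = a. *)
pose I := [set p : R * R | [/\ 0 < p.2 <= d, a <= p.1 <= m & p.1 = a \/ ~ V p]].
pose K := 2 * (m - a).
have K_ge0 : 0 <= K by rewrite /K; lra.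
have fst_le p : I p -> p.1 <= m by case=> _ /andP[].
have I_height p : I p -> 0 <= p.2 <= d by case=> /andP[? ?] _ _; rewrite ltW.
have edge y : 0 < y <= d -> I (a, y) by split => //; [rewrite lexx ltW | left].
have I_neq0 : I !=set0 by exists (a, d); apply: edge; rewrite d_gt0 lexx.
have above := @envelope_curve_gt _ _ _ _ _ K_ge0 fst_le.
exists (envelope_curve I fst K); split.
- move=> y y_gt0.
  exact: (envelope_curve_continuous K_ge0 fst_le I_height I_neq0 (lt0r_neq0 y_gt0)).
- apply: (envelope_curve_cvg K_ge0 fst_le I_neq0 d_gt0).
  + by move=> y yd; exists (a, y) => //; exact: edge.
  + rewrite /K; lra.
  move=> e e_gt0.
  have [|eta eta_gt0 tube] := @segment_tube _ V (Num.min (a + e) m) m oV.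
    move=> x /andP[lx xm]; apply: V0; rewrite xm andbT; apply: lt_le_trans lx.
    by rewrite lt_min am andbT ltrDl.
  exists eta => // -[x y] [/andP[y_gt0 _] /andP[ax xm] [/= xa | nV]] /= aex.
    by move: aex; rewrite xa; lra.
  rewrite leNgt; apply/negP => y_eta; apply: nV; apply: tube.
    by rewrite xm andbT ge_min aex.
  by rewrite gtr0_norm.
- by move=> y; exact: envelope_curve_le.
move=> x y yd /andP[ax xm]; apply/not_notP => nV.
have a_lt := above _ (edge y yd) ltac:(by case/andP: yd).
have /above : I (x, y) by split => //; [rewrite xm (ltW (lt_le_trans a_lt ax)) | right].
by move=> /(_ ltac:(by case/andP: yd)); rewrite /= ltNge ax.
Qed.

Lemma right_side_curve (V : set (R * R)) (b m d : R) :
  open V -> m < b -> 0 < d -> (forall x, m <= x < b -> V (x, 0)) ->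
  exists beta : R -> R,
    [/\ forall y, 0 < y -> {for y, continuous beta},
        beta y @[y --> 0^'+] --> b,
        forall y, m - y <= beta y
      & forall x y, 0 < y <= d -> m <= x <= beta y -> V (x, y)].
Proof.
move=> oV mb d_gt0 V0.
pose flip (p : R * R) := (- p.1, p.2).
have flipV_open : open (flip @^-1` V).
  apply: open_comp => // -[x y] _.
  apply: (@cvg_pair _ _ _ _ (nbhs (- x)) (nbhs y)); last exact: cvg_snd.
  by apply: cvgN; exact: cvg_fst.
have [|||alpha [alpha_cont alpha_cvg alpha_le alpha_V]] :=
  @left_side_curve _ (- b) (- m) d flipV_open.
- by rewrite ltrN2.
- done.
- by move=> x /andP[bx xm]; rewrite /flip /=; apply: V0; rewrite lerNr xm ltrNl.
exists (fun y => - alpha y); split.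
- by move=> y /alpha_cont; exact: cvgN.
- by rewrite -[b]opprK; exact: cvgN.
- by move=> y; have := alpha_le y; lra.
move=> x y yd /andP[mx xb].
by have := alpha_V (- x) y yd; rewrite /flip /= opprK; apply; apply/andP; split; lra.
Qed.

End Sides.

Theorem lemma5p1 (R : realType) (a b : R) (U : set (R * R)) :
  a < b ->
  U `<=` setN a b ->
  (exists V : set (R * R), open V /\ U = V `&` setN a b) ->
  segJ a b `<=` U ->
  exists T : set (R * R), T `<=` U /\ trapezoid_with_base T a b 0.
Proof.
move=> ab _ [V [oV ->]] JU.
have V0 x : a < x -> x < b -> V (x, 0).
  by move=> ax xb; have [] // : (V `&` setN a b) (x, 0) by apply: JU; rewrite /segJ /= ax.
pose w := b - a; pose m1 := a + w / 3; pose m2 := b - w / 3.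
have w_gt0 : 0 < w by rewrite subr_gt0.
have [|eta eta_gt0 middle] := @segment_tube _ V m1 m2 oV.
  by move=> x /andP[lx xr]; apply: V0; rewrite /m1 /m2 /w in lx xr *; lra.
pose d := Num.min (eta / 2) (w / 12).
have d_gt0 : 0 < d by rewrite lt_min !divr_gt0.
have d_eta : d < eta by rewrite gt_min; apply/orP; left; lra.
have d_w : d <= w / 12 by rewrite ge_min lexx orbT.
have [||alpha [alpha_cont alpha_cvg alpha_le left]] := @left_side_curve _ V a m1 d oV _ d_gt0.
- by rewrite /m1 /w; lra.
- by move=> x /andP[lx xr]; apply: V0; rewrite /m1 /m2 /w in lx xr *; lra.
have [||beta [beta_cont beta_cvg beta_ge right]] := @right_side_curve _ V b m2 d oV _ d_gt0.
- by rewrite /m2 /w; lra.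
- by move=> x /andP[lx xr]; apply: V0; rewrite /m1 /m2 /w in lx xr *; lra.
exists [set p | 0 < p.2 <= d /\ alpha p.2 <= p.1 <= beta p.2]; split.
  move=> [x y] /= [yd /andP[ax xb]]; split; last by right; case/andP: yd.
  have [xm1|m1x] := leP x m1; first by apply: left; rewrite ?ax.
  have [m2x|xm2] := leP m2 x; first by apply: right; rewrite ?m2x.
  case/andP: yd => y_gt0 yd; apply: middle; first by rewrite (ltW m1x) (ltW xm2).
  by rewrite gtr0_norm // (le_lt_trans yd d_eta).
split => //; exists d, alpha, beta; split => //; split => //.
- by apply: continuous_in_subspaceT => y; rewrite inE /= in_itv /= => /andP[/alpha_cont].
- by apply: continuous_in_subspaceT => y; rewrite inE /= in_itv /= => /andP[/beta_cont].
move=> y /andP[y_gt0 yd]; have := alpha_le y; have := beta_ge y.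
by rewrite /m1 /m2 /w in d_w *; lra.
Qed.
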